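(* Let $\pi,\rho$ be probability distributions on $\Sigma^n=\{0,1\}^n$ with fidelity $F(\pi,\rho)=\sum_{x}\sqrt{\pi_x\rho_x}\ge1-\delta$, and let $t>4$. Let $M_t(\pi,\rho)=\{x\in\Sigma^n:\pi_x>0,\ \rho_x>0,\ t^{-1}\le\pi_x/\rho_x\le t\}$ be the set of $t$-balanced strings. Then $$\sum_{x\in M_t(\pi,\rho)}\pi_x\ge1-\frac{2\delta}{1-2t^{-1/2}}.$$ *)

From mathcomp Require Import all_boot all_order all_algebra.
Set Implicit Arguments. Unset Strict Implicit. Unset Printing Implicit Defensive.
Import Order.TTheory GRing.Theory Num.Theory.
Local Open Scope ring_scope.

Definition is_distr (R : realFieldType) (T : finType) (p : T -> R) : Prop :=
  (forall x, 0 <= p x) /\ \sum_(x : T) p x = 1.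

Definition fidelity (R : rcfType) (T : finType) (p q : T -> R) : R :=
  \sum_(x : T) Num.sqrt (p x * q x).

Definition balanced_set (R : realFieldType) (T : finType) (t : R) (p q : T -> R)
  : {set T} :=
  [set x | [&& 0 < p x, 0 < q x, t^-1 <= p x / q x & p x / q x <= t]].

(* Write a_x = sqrt(pi_x), b_x = sqrt(rho_x) and s = sqrt t.  The squared
   Hellinger distance sum_x (a_x - b_x)^2 equals 2 - 2 F(pi, rho) <= 2 delta.
   A string outside M_t has b_x >= s a_x or a_x >= s b_x, and in either case
   (a_x - b_x)^2 >= (1 - 2/s) pi_x.  Summing over the complement of M_t bounds
   its pi-mass by 2 delta / (1 - 2/s). *)

From mathcomp Require Import all_boot all_order all_algebra.
From mathcomp Require Import ring lra.
Import Order.TTheory GRing.Theory Num.Theory.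
Local Open Scope ring_scope.

Section SqrtGap.

Context {R : rcfType}.
Implicit Types a b p q s t : R.

Lemma sqrt_gt2 {t} : 4 < t -> 2 < Num.sqrt t.
Proof.
move=> t_gt4; have -> : 2 = Num.sqrt (2 ^+ 2) :> R by rewrite sqrtr_sqr ger0_norm.
by rewrite ltr_sqrt; lra.
Qed.

Lemma sqr_sub_sqrt p q : 0 <= p -> 0 <= q ->
  (Num.sqrt p - Num.sqrt q) ^+ 2 = p + q - 2 * Num.sqrt (p * q).
Proof.
move=> p_ge0 q_ge0; rewrite sqrtrM // -{2}(sqr_sqrtr p_ge0) -{2}(sqr_sqrtr q_ge0).
ring.
Qed.

(* If one of a, b is at least s times the other, then |a - b| >= (1 - 1/s) a,
   and (1 - 1/s)^2 >= 1 - 2/s. *)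
Lemma sqr_sub_ge_of_ratio_gap s a b : 2 <= s -> 0 <= a -> 0 <= b ->
  s * a <= b \/ s * b <= a -> a ^+ 2 * (1 - 2 * s^-1) <= (a - b) ^+ 2.
Proof.
move=> s_ge2 a_ge0 b_ge0 gap; have s_gt0 : 0 < s by lra.
have -> : a ^+ 2 * (1 - 2 * s^-1) = a ^+ 2 * (s - 2) / s by field; lra.
rewrite ler_pdivrMr //.
case: gap => [sa_le_b | sb_le_a]; first nra.
have s_diff_ge : (s - 1) * a <= s * (a - b) by nra.
nra.
Qed.

Lemma not_balanced_sqrt_gap t p q : 0 < t -> 0 <= p -> 0 <= q ->
  ~~ [&& 0 < p, 0 < q, t^-1 <= p / q & p / q <= t] ->
  Num.sqrt t * Num.sqrt p <= Num.sqrt q \/ Num.sqrt t * Num.sqrt q <= Num.sqrt p.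
Proof.
move=> t_gt0 p_ge0 q_ge0.
rewrite -!sqrtrM ?(ltW t_gt0) // !ler_sqrt //.
have [p0|p_gt0] := eqVneq p 0; first by rewrite p0 mulr0; left.
have [q0|q_gt0] := eqVneq q 0; first by rewrite q0 mulr0; right.
have p_pos : 0 < p by rewrite lt0r p_gt0.
have q_pos : 0 < q by rewrite lt0r q_gt0.
rewrite p_pos q_pos /=; case/nandP; rewrite -ltNge.
  by rewrite ltr_pdivrMr // ltr_pdivlMl // => /ltW; left.
by rewrite ltr_pdivlMr // => /ltW; right.
Qed.

End SqrtGap.

Section Hellinger.

Context {R : rcfType} {T : finType}.

Lemma sum_sqr_sub_sqrt (p q : T -> R) : is_distr p -> is_distr q ->
  \sum_x (Num.sqrt (p x) - Num.sqrt (q x)) ^+ 2 = 2 - 2 * fidelity p q.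
Proof.
move=> [p_ge0 p1] [q_ge0 q1].
under eq_bigr do rewrite sqr_sub_sqrt //.
by rewrite /fidelity !big_split /= p1 q1 sumrN -mulr_sumr; ring.
Qed.

Lemma unbalanced_le_sqr_sub_sqrt (p q : T -> R) t x : 4 < t ->
  is_distr p -> is_distr q -> x \notin balanced_set t p q ->
  p x * (1 - 2 * (Num.sqrt t)^-1) <= (Num.sqrt (p x) - Num.sqrt (q x)) ^+ 2.
Proof.
move=> t_gt4 [p_ge0 _] [q_ge0 _]; rewrite inE => x_unbal.
rewrite -{1}(sqr_sqrtr (p_ge0 x)).
apply: sqr_sub_ge_of_ratio_gap; rewrite ?sqrtr_ge0 //.
  exact/ltW/sqrt_gt2.
by apply: not_balanced_sqrt_gap => //; lra.
Qed.

Lemma unbalanced_mass_le (p q : T -> R) {t} : 4 < t -> is_distr p -> is_distr q ->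
  (\sum_(x | x \notin balanced_set t p q) p x) * (1 - 2 * (Num.sqrt t)^-1)
    <= 2 - 2 * fidelity p q.
Proof.
move=> t_gt4 p_distr q_distr.
rewrite -sum_sqr_sub_sqrt // mulr_suml.
rewrite [X in _ <= X](bigID (mem (balanced_set t p q))) /= -[X in X <= _]add0r.
apply: lerD.
  by apply: sumr_ge0 => x _; apply: sqr_ge0.
by apply: ler_sum => x; apply: unbalanced_le_sqr_sub_sqrt.
Qed.

End Hellinger.

Theorem lemma5p4 (R : rcfType) (n : nat) (pi rho : n.-tuple bool -> R)
    (delta t : R) :
  is_distr pi -> is_distr rho ->
  1 - delta <= fidelity pi rho ->
  4 < t ->
  1 - (2 * delta) / (1 - 2 * (Num.sqrt t)^-1)
    <= \sum_(x in balanced_set t pi rho) pi x.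
Proof.
move=> pi_distr rho_distr fid_ge t_gt4.
have out_le := unbalanced_mass_le pi rho t_gt4 pi_distr rho_distr.
have u_gt0 : 0 < 1 - 2 * (Num.sqrt t)^-1.
  have s_gt2 := sqrt_gt2 t_gt4.
  rewrite subr_gt0 -ltr_pdivlMr ?invr_gt0 ?invrK; lra.
have [_ pi1] := pi_distr.
move: pi1; rewrite (bigID (mem (balanced_set t pi rho))) /= => pi1.
have : \sum_(x | x \notin balanced_set t pi rho) pi x
    <= 2 * delta / (1 - 2 * (Num.sqrt t)^-1).
  by rewrite ler_pdivlMr //; lra.
lra.
Qed.
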